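(* Let $E,F$ be Banach lattices, let $\mathcal{P}\subseteq \mathrm{L}(E,F)$ be a nonempty set of operators with $\mathcal{P}+\mathcal{P}\subseteq\mathcal{P}$ and $\mathcal{P}-\mathcal{P}\subseteq\mathcal{P}$, and let $T\in\mathrm{L}(E,F)$. (i) $T$ is an r-$\mathcal{P}$-operator if and only if $T\in\mathcal{P}$ and $T$ is $\mathcal{P}$-dominated. (ii) Assume the modulus $|T|$ of $T$ exists in $\mathrm{L}(E,F)$ and that $\mathcal{P}$ satisfies the domination property. Then $T$ is an r-$\mathcal{P}$-operator if and only if $|T|\in\mathcal{P}$.
   Context: All vector spaces are real; $\mathrm{L}(E,F)$ is the space of bounded linear operators, ordered by $S\le T$ iff $T-S$ is positive. Elements of $\mathcal{P}$ are called $\mathcal{P}$-operators. An operator $T:E\to F$ is an r-$\mathcal{P}$-operator if $T=T_1-T_2$ with $T_1,T_2$ positive operators belonging to $\mathcal{P}$. $\mathcal{P}$ satisfies the domination property if $0\le S\le T\in\mathcal{P}$ implies $S\in\mathcal{P}$. An operator $T\in\mathrm{L}(E,F)$ is $\mathcal{P}$-dominated if there is $U\in\mathcal{P}$ with $T\le U$ and $-T\le U$. *)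

From HB Require Import structures.
From mathcomp Require Import all_boot all_order all_algebra.
From mathcomp Require Import all_classical all_reals all_analysis.
Set Implicit Arguments. Unset Strict Implicit. Unset Printing Implicit Defensive.
Import Order.TTheory GRing.Theory Num.Theory.
Import numFieldNormedType.Exports.
Local Open Scope ring_scope.
Local Open Scope classical_set_scope.

Definition is_sup (T : Type) (le : T -> T -> Prop) (x y s : T) : Prop :=
  le x s /\ le y s /\ (forall z, le x z -> le y z -> le s z).

(* A Banach lattice: a (real) Banach space E together with a partial order
   le making it a vector lattice, with a lattice norm
   (|x| <= |y| implies ||x|| <= ||y||, where |x| = x \/ -x). *)
Record banach_lattice (R : realType) (E : completeNormedModType R)
    (le : E -> E -> Prop) : Prop := BanachLattice {
  bl_refl : forall x, le x x;
  bl_antisym : forall x y, le x y -> le y x -> x = y;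
  bl_trans : forall x y z, le x y -> le y z -> le x z;
  bl_add : forall x y z, le x y -> le (x + z) (y + z);
  bl_scale : forall (a : R) x y, 0 <= a -> le x y -> le (a *: x) (a *: y);
  bl_sup : forall x y, exists s, is_sup le x y s;
  bl_norm : forall x y ax ay, is_sup le x (- x) ax -> is_sup le y (- y) ay ->
              le ax ay -> `|x| <= `|y|
}.

Section Ops.
Variables (R : realType) (E F : completeNormedModType R).
Variables (leE : E -> E -> Prop) (leF : F -> F -> Prop).

Definition bounded_linear (T : E -> F) : Prop :=
  (forall (a : R) x y, T (a *: x + y) = a *: T x + T y) /\
  (exists M : R, forall x, `|T x| <= M * `|x|).

Definition positive_op (T : E -> F) : Prop :=
  forall x, leE 0 x -> leF 0 (T x).

Definition op_le (S T : E -> F) : Prop :=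
  positive_op (fun x => T x - S x).

Definition r_P_operator (P : set (E -> F)) (T : E -> F) : Prop :=
  exists T1 T2, P T1 /\ P T2 /\ positive_op T1 /\ positive_op T2 /\
    T = (fun x => T1 x - T2 x).

Definition P_dominated (P : set (E -> F)) (T : E -> F) : Prop :=
  exists U, P U /\ op_le T U /\ op_le (fun x => - T x) U.

Definition domination_property (P : set (E -> F)) : Prop :=
  forall S T, bounded_linear S -> op_le (fun _ => 0) S -> op_le S T -> P T -> P S.

Definition is_modulus (T U : E -> F) : Prop :=
  bounded_linear U /\ op_le T U /\ op_le (fun x => - T x) U /\
  (forall V, bounded_linear V -> op_le T V -> op_le (fun x => - T x) V ->
     op_le U V).
End Ops.

From mathcomp Require Import all_boot all_order all_algebra.
From mathcomp Require Import all_classical all_reals all_analysis.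
Import Order.TTheory GRing.Theory Num.Theory.
Local Open Scope ring_scope.
Local Open Scope classical_set_scope.
Set Implicit Arguments. Unset Strict Implicit.

(* (i): if U in P dominates T, then T = (U + T) - U is a difference of the
   positive P-operators U + T and U; conversely T1 - T2 is dominated by
   T1 + T2.  (ii): |T| lies below every operator dominating T, which gives
   |T| in P; conversely 0 <= |T| + T <= |T| + |T| puts |T| + T, and hence
   T = (|T| + T) - |T|, into P by the domination property. *)

Section PositiveCone.
Variables (R : realType) (F : completeNormedModType R) (leF : F -> F -> Prop).
Hypothesis hF : banach_lattice leF.

Lemma ge0D (a b : F) : leF 0 a -> leF 0 b -> leF 0 (a + b).
Proof.
move=> a_ge0 b_ge0; apply: (bl_trans hF b_ge0).
by have := bl_add hF b a_ge0; rewrite add0r addrC.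
Qed.

Lemma ge0_mulr2n (a : F) : leF 0 (a *+ 2) -> leF 0 a.
Proof.
move=> a2_ge0; have half_ge0 : (0 : R) <= 2^-1 by rewrite invr_ge0.
have := bl_scale hF half_ge0 a2_ge0.
by rewrite scaler0 -scalerMnr scalerMnl -mulr_natr mulVf ?pnatr_eq0 // scale1r.
Qed.

End PositiveCone.

Section Operators.
Variables (R : realType) (E F : completeNormedModType R).
Variables (leE : E -> E -> Prop) (leF : F -> F -> Prop).
Hypothesis hF : banach_lattice leF.

Lemma eq_positive_op (S T : E -> F) :
  (forall x, S x = T x) -> positive_op leE leF S -> positive_op leE leF T.
Proof. by move=> eqST S_ge0 x x_ge0; rewrite -eqST; exact: S_ge0. Qed.

Lemma positive_opD (S T : E -> F) :
  positive_op leE leF S -> positive_op leE leF T ->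
  positive_op leE leF (fun x => S x + T x).
Proof. by move=> S_ge0 T_ge0 x x_ge0; apply: ge0D; [|exact: S_ge0|exact: T_ge0]. Qed.

Lemma bounded_linearD (S T : E -> F) :
  bounded_linear S -> bounded_linear T -> bounded_linear (fun x => S x + T x).
Proof.
move=> [linS [MS boundS]] [linT [MT boundT]]; split.
  by move=> a x y; rewrite linS linT scalerDr addrACA.
exists (MS + MT) => x; rewrite mulrDl.
by apply: le_trans (ler_normD _ _) _; apply: lerD.
Qed.

(* (U - T) + (U + T) = U *+ 2. *)
Lemma dominating_positive (T U : E -> F) :
  op_le leE leF T U -> op_le leE leF (fun x => - T x) U ->
  positive_op leE leF U.
Proof.
move=> T_le_U NT_le_U x x_ge0; apply: (ge0_mulr2n hF).
have := ge0D hF (T_le_U x x_ge0) (NT_le_U x x_ge0).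
by rewrite opprK addrACA addNr addr0 -mulr2n.
Qed.

Lemma dominates_difference (S1 S2 : E -> F) :
  positive_op leE leF S1 -> positive_op leE leF S2 ->
  op_le leE leF (fun x => S1 x - S2 x) (fun x => S1 x + S2 x) /\
  op_le leE leF (fun x => - (S1 x - S2 x)) (fun x => S1 x + S2 x).
Proof.
move=> S1_ge0 S2_ge0; split.
  apply: eq_positive_op (positive_opD S2_ge0 S2_ge0) => x.
  by rewrite opprB [RHS]addrC addrA subrK.
apply: eq_positive_op (positive_opD S1_ge0 S1_ge0) => x.
by rewrite opprK addrACA subrr addr0.
Qed.

Section OperatorClass.
Variable P : set (E -> F).
Hypothesis hPadd : forall S T, P S -> P T -> P (fun x => S x + T x).
Hypothesis hPsub : forall S T, P S -> P T -> P (fun x => S x - T x).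

Lemma r_P_operatorP (T : E -> F) :
  r_P_operator leE leF P T <-> P T /\ P_dominated leE leF P T.
Proof.
split.
  move=> [S1 [S2 [PS1 [PS2 [S1_ge0 [S2_ge0 ->]]]]]]; split; first exact: hPsub.
  exists (fun x => S1 x + S2 x); split; first exact: hPadd.
  exact: dominates_difference.
move=> [PT [U [PU [T_le_U NT_le_U]]]].
exists (fun x => U x + T x), U.
split; first exact: hPadd.
split; first exact: PU.
split; first by apply: eq_positive_op NT_le_U => x; rewrite opprK.
split; first exact: dominating_positive NT_le_U.
by apply: funext => x; rewrite addrAC subrr add0r.
Qed.

Section Modulus.
Hypothesis hPL : forall S, P S -> bounded_linear S.
Hypothesis hPdom : domination_property leE leF P.
Variables (T U : E -> F).
Hypothesis hU : is_modulus leE leF T U.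

Lemma modulus_positive : positive_op leE leF U.
Proof. by case: hU => _ [T_le_U [NT_le_U _]]; exact: dominating_positive NT_le_U. Qed.

Lemma P_dominated_modulus : P_dominated leE leF P T -> P U.
Proof.
case: hU => linU [_ [_ U_least]] [V [PV [T_le_V NT_le_V]]].
have U_ge0 : op_le leE leF (fun=> 0) U.
  by apply: eq_positive_op modulus_positive => x; rewrite subr0.
exact: hPdom U V linU U_ge0 (U_least V (hPL PV) T_le_V NT_le_V) PV.
Qed.

Lemma modulus_P_operator : bounded_linear T -> P U -> P T.
Proof.
case: hU => linU [T_le_U [NT_le_U _]] linT PU.
have PUT : P (fun x => U x + T x).
  have UT_ge0 : op_le leE leF (fun=> 0) (fun x => U x + T x).
    by apply: eq_positive_op NT_le_U => x; rewrite opprK subr0.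
  have UT_le_UU : op_le leE leF (fun x => U x + T x) (fun x => U x + U x).
    by apply: eq_positive_op T_le_U => x; rewrite opprD addrACA subrr add0r.
  exact: hPdom _ _ (bounded_linearD linU linT) UT_ge0 UT_le_UU (hPadd PU PU).
have -> : T = (fun x => U x + T x - U x).
  by apply: funext => x; rewrite addrAC subrr add0r.
exact: hPsub.
Qed.

End Modulus.
End OperatorClass.
End Operators.

Theorem proposition3p4 (R : realType) (E F : completeNormedModType R)
  (leE : E -> E -> Prop) (leF : F -> F -> Prop)
  (hE : banach_lattice leE) (hF : banach_lattice leF)
  (P : set (E -> F))
  (hPL : forall S, P S -> bounded_linear S)
  (hP0 : P !=set0)
  (hPadd : forall S T, P S -> P T -> P (fun x => S x + T x))
  (hPsub : forall S T, P S -> P T -> P (fun x => S x - T x))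
  (T : E -> F) (hT : bounded_linear T) :
  (r_P_operator leE leF P T <-> (P T /\ P_dominated leE leF P T)) /\
  (forall U, is_modulus leE leF T U -> domination_property leE leF P ->
     (r_P_operator leE leF P T <-> P U)).
Proof.
have rPP := r_P_operatorP leE hF hPadd hPsub T.
split=> [|U hU hPdom]; first exact: rPP.
rewrite rPP; split=> [[_ T_dom] | PU].
  exact (P_dominated_modulus hF hPL hPdom hU T_dom).
split; first exact (modulus_P_operator hPadd hPsub hPdom hU hT PU).
case: hU => _ [T_le_U [NT_le_U _]].
exists U; exact (conj PU (conj T_le_U NT_le_U)).
Qed.
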